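(* For integers $n,r$ with $3\le r\le n-3$, there is no graph $H$ with $\mathsf{TS}_2(H)\cong J(n,r)$; that is, $2\notin\mathcal{K}^{\mathsf{TS}}(J(n,r))$.
   Context: All graphs are finite, simple, undirected. A $k$-clique of a graph $H$ is a set of $k$ pairwise adjacent vertices. For a graph $H$ and integer $k\ge1$, the Token Sliding graph $\mathsf{TS}_k(H)$ has as vertices the $k$-cliques of $H$, and two $k$-cliques $A,B$ are adjacent iff $A\setminus B=\{u\}$, $B\setminus A=\{v\}$ for some vertices $u,v$ with $uv\in E(H)$. $\mathcal{K}^{\mathsf{TS}}(G)=\{k\ge1:\ \exists H,\ \mathsf{TS}_k(H)\cong G\}$. The Johnson graph $J(n,r)$ has as vertices the $r$-subsets of $\{1,\dots,n\}$, two being adjacent iff their intersection has size $r-1$. *)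

From mathcomp Require Import all_boot.
Set Implicit Arguments. Unset Strict Implicit. Unset Printing Implicit Defensive.

(* A (finite simple) graph is given by a vertex finType T and an edge relation
   e : rel T assumed symmetric and irreflexive. *)

Definition is_clique (T : finType) (e : rel T) (A : {set T}) : bool :=
  [forall u in A, forall v in A, (u != v) ==> e u v].

Definition is_kclique (T : finType) (e : rel T) (k : nat) (A : {set T}) : bool :=
  (#|A| == k) && is_clique e A.

Definition ts_adj (T : finType) (e : rel T) (A B : {set T}) : bool :=
  [exists u : T, exists v : T,
     [&& A :\: B == [set u], B :\: A == [set v] & e u v]].

Definition johnson_vertex (n r : nat) (A : {set 'I_n}) : bool := #|A| == r.
Definition johnson_adj (n r : nat) (A B : {set 'I_n}) : bool := #|A :&: B| == r.-1.

Definition graph_iso (V W : finType) (P : pred V) (eV : rel V)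
    (Q : pred W) (eW : rel W) : Prop :=
  exists f : V -> W,
    [/\ (forall x, P x -> Q (f x)),
        {in P &, injective f},
        (forall y, Q y -> exists2 x, P x & f x = y) &
        {in P &, forall x y, eV x y = eW (f x) (f y)}].

(* In TS_2(H) every edge {w,u} -- {w,v} lies in the triangle completed by
   {u,v}, and no 2-clique W slides to all three: W would have to contain
   exactly one element of each of the pairs {u,w}, {v,w}, {u,v}, which is
   impossible by parity.  In J(n,r) with 3 <= r <= n-3 every triangle A, B, C
   has a common neighbour: w |: (A :&: B) with w outside A :|: B :|: C when
   A :&: B \subset C, and (A :|: B) :\ w with w in A :&: B :&: C otherwise. *)

From mathcomp Require Import all_boot zify.

Set Implicit Arguments.
Unset Strict Implicit.
Unset Printing Implicit Defensive.

Lemma setU1I_id (T : finType) (a : T) (S X : {set T}) :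
  S \subset X -> a \notin X -> (a |: S) :&: X = S.
Proof.
by move=> sSX aX; rewrite setIUl (setIidPl sSX) disjoint_setI0 ?disjoints1 ?set0U.
Qed.

Lemma setD1I_id (T : finType) (a : T) (U X : {set T}) :
  X \subset U -> (U :\ a) :&: X = X :\ a.
Proof. by move=> sXU; rewrite setIDAC (setIidPr sXU). Qed.

Section JohnsonTriangle.

Variables (T : finType) (r : nat) (A B C : {set T}).
Hypotheses (r_ge3 : 3 <= r) (cardA : #|A| = r) (cardB : #|B| = r) (cardC : #|C| = r).
Hypotheses (cardAB : #|A :&: B| = r.-1) (cardAC : #|A :&: C| = r.-1)
  (cardBC : #|B :&: C| = r.-1).

Lemma card_setU_adj : #|A :|: B| = r.+1.
Proof. by rewrite cardsU; lia. Qed.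

Lemma johnson_common_nbr_subset : A :&: B \subset C -> r.+2 < #|T| ->
  exists W : {set T},
    [/\ #|W| = r, #|W :&: A| = r.-1, #|W :&: B| = r.-1 & #|W :&: C| = r.-1].
Proof.
move=> sABC bigT.
have card_ABC : #|A :|: B :|: C| <= r.+2.
  have : #|A :&: C| <= #|(A :|: B) :&: C| by apply/subset_leq_card/setSI/subsetUl.
  by rewrite cardsU card_setU_adj; lia.
have [w] : exists w, w \in ~: (A :|: B :|: C).
  by apply/card_gt0P; rewrite cardsCs setCK; lia.
rewrite !inE => /norP[/norP[wA wB] wC].
exists (w |: A :&: B); rewrite !setU1I_id ?subsetIl ?subsetIr //.
by rewrite cardsU1 inE (negPf wA) cardAB; split=> //; lia.
Qed.

Lemma johnson_common_nbr_not_subset : ~~ (A :&: B \subset C) ->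
  exists W : {set T},
    [/\ #|W| = r, #|W :&: A| = r.-1, #|W :&: B| = r.-1 & #|W :&: C| = r.-1].
Proof.
move=> nsABC.
have card_ABC_lt : #|A :&: B :&: C| < r.-1.
  by rewrite -cardAB; apply: proper_card; rewrite properEneq subsetIl andbT;
     apply: contraNneq nsABC => <-; apply: subsetIr.
have card_UC : #|(A :|: B) :&: C| + #|A :&: B :&: C| = (r.-1).*2.
  have := cardsU (A :&: C) (B :&: C).
  rewrite -setIUl -setIACA setIid cardAC cardBC => ->.
  have : #|A :&: B :&: C| <= #|A :&: C| by apply/subset_leq_card/setSI/subsetIl.
  lia.
have sCAB : C \subset A :|: B.
  have /eqP <- : (A :|: B) :&: C == C by rewrite eqEcard subsetIr cardC; lia.
  exact: subsetIl.
have [w] : exists w, w \in A :&: B :&: C.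
  have : #|(A :|: B) :&: C| <= #|C| by apply/subset_leq_card/subsetIr.
  by move=> ?; apply/card_gt0P; lia.
rewrite !inE => /andP[/andP[wA wB] wC].
have cardD1 (X : {set T}) : w \in X -> #|X :\ w| = #|X|.-1.
  by move=> wX; rewrite (cardsD1 w X) wX.
exists ((A :|: B) :\ w).
rewrite !setD1I_id ?subsetUl ?subsetUr // !cardD1 ?inE ?wA ?wB ?wC //.
by rewrite card_setU_adj cardA cardB cardC.
Qed.

Lemma johnson_triangle_common_nbr : r + 3 <= #|T| ->
  exists W : {set T},
    [/\ #|W| = r, #|W :&: A| = r.-1, #|W :&: B| = r.-1 & #|W :&: C| = r.-1].
Proof.
move=> bigT; have [sABC | nsABC] := boolP (A :&: B \subset C).
- by apply: johnson_common_nbr_subset; last lia.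
- exact: johnson_common_nbr_not_subset.
Qed.

End JohnsonTriangle.

Section TokenSliding2.

Variables (T : finType) (e : rel T).
Hypotheses (e_sym : symmetric e) (e_irr : irreflexive e).

Lemma edge_neq x y : e x y -> x != y.
Proof. by apply: contraTneq => ->; rewrite e_irr. Qed.

Lemma clique_edge (X : {set T}) x y :
  is_clique e X -> x \in X -> y \in X -> x != y -> e x y.
Proof. by move=> /forall_inP clX /clX/forall_inP clXx /clXx/implyP. Qed.

Lemma kclique2_set2 a b : e a b -> is_kclique e 2 [set a; b].
Proof.
move=> eab; rewrite /is_kclique cards2 edge_neq //=.
apply/forall_inP=> x /set2P[]->; apply/forall_inP=> y /set2P[]->;
  by rewrite ?eqxx ?eab ?implybT // e_sym eab implybT.
Qed.

Lemma ts_adj_set2 a b c : e a b -> e a c -> e b c ->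
  ts_adj e [set a; c] [set b; c].
Proof.
move=> eab eac ebc.
have /negPf ab := edge_neq eab; have /negPf ac := edge_neq eac.
have /negPf bc := edge_neq ebc.
apply/existsP; exists a; apply/existsP; exists b; rewrite eab andbT.
apply/andP; split; apply/eqP/setP=> x; rewrite !inE.
all: have [->|/negPf xa] := eqVneq x a; rewrite ?eqxx ?ab ?ac ?xa //=.
all: have [->|/negPf xb] := eqVneq x b; rewrite ?eqxx ?(eq_sym c) ?bc ?xb //=.
all: by case: eqP.
Qed.

Lemma ts_adj_set2_mem (W : {set T}) a b :
  a != b -> ts_adj e W [set a; b] -> (a \in W) != (b \in W).
Proof.
move=> /negPf ab /existsP[p /existsP[q /and3P[_ /eqP qD _]]].
have mem (x : T) : (x \notin W) && (x \in [set a; b]) = (x == q).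
  by rewrite -in_set1 -qD in_setD.
have := mem q; rewrite eqxx => /andP[qW /set2P[] qE]; subst q.
- by move: (mem b); rewrite set22 eq_sym ab andbT => /negbFE ->; rewrite (negPf qW).
- by move: (mem a); rewrite set21 ab andbT => /negbFE ->; rewrite (negPf qW).
Qed.

Lemma ts_adj_kclique2 (X Y : {set T}) :
  is_kclique e 2 X -> is_kclique e 2 Y -> ts_adj e X Y ->
  exists u v w, [/\ X = [set w; u], Y = [set w; v], e u v, e u w & e v w].
Proof.
move=> /andP[/eqP cardX clX] /andP[/eqP cardY clY].
case/existsP=> u /existsP[v /and3P[/eqP XDY /eqP YDX euv]].
have /cards1P[w XIY] : #|X :&: Y| == 1.
  by have := cardsID Y X; rewrite XDY cards1 cardX; lia.
have X_eq : X = [set w; u] by rewrite -XDY -XIY setID.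
have Y_eq : Y = [set w; v] by rewrite -YDX -XIY setIC setID.
have uY : u \notin Y by have := set11 u; rewrite -XDY inE => /andP[].
have vX : v \notin X by have := set11 v; rewrite -YDX inE => /andP[].
exists u, v, w; split=> //.
- apply: clique_edge clX _ _ _; rewrite ?X_eq ?set21 ?set22 //.
  by apply: contraNneq uY => ->; rewrite Y_eq set21.
- apply: clique_edge clY _ _ _; rewrite ?Y_eq ?set21 ?set22 //.
  by apply: contraNneq vX => ->; rewrite X_eq set21.
Qed.

Lemma ts2_triangle_without_common_nbr (X Y : {set T}) :
  is_kclique e 2 X -> is_kclique e 2 Y -> ts_adj e X Y ->
  exists2 Z, [/\ is_kclique e 2 Z, ts_adj e X Z & ts_adj e Y Z] &
    forall W, ~~ [&& ts_adj e W X, ts_adj e W Y & ts_adj e W Z].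
Proof.
move=> kX kY /(ts_adj_kclique2 kX kY)[u [v [w [-> -> euv euw evw]]]].
have [ewu ewv evu] : [/\ e w u, e w v & e v u] by split; rewrite e_sym.
exists [set u; v]; first split.
- exact: kclique2_set2.
- by rewrite [[set u; v]]setUC; apply: ts_adj_set2.
- exact: ts_adj_set2.
move=> W; apply/and3P=> -[WX WY WZ].
move: (ts_adj_set2_mem (edge_neq ewu) WX) (ts_adj_set2_mem (edge_neq ewv) WY).
move: (ts_adj_set2_mem (edge_neq euv) WZ).
by case: (u \in W); case: (v \in W); case: (w \in W).
Qed.

End TokenSliding2.

Lemma johnson_edge (n r : nat) : 0 < r < n ->
  exists A B : {set 'I_n}, [/\ #|A| = r, #|B| = r & #|A :&: B| = r.-1].
Proof.
case/andP=> r_gt0 r_lt_n.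
pose A : {set 'I_n} := [set widen_ord (ltnW r_lt_n) i | i : 'I_r].
have cardA : #|A| = r.
  by rewrite card_imset ?card_ord // => i j /(congr1 val) /= /ord_inj.
have [x xA] : exists x, x \in A by apply/card_gt0P; rewrite cardA.
have [y yA] : exists y, y \in ~: A.
  by apply/card_gt0P; rewrite cardsCs setCK cardA card_ord subn_gt0.
rewrite inE in yA.
have xAD1 : #|A :\ x| = r.-1 by rewrite -cardA (cardsD1 x A) xA.
exists A, (y |: A :\ x); split=> //.
- by rewrite cardsU1 !inE (negPf yA) andbF xAD1; lia.
- by rewrite setIC setU1I_id ?subsetDl.
Qed.

Theorem theorem3p9 (n r : nat) :
  3 <= r -> r <= n - 3 ->
  forall (T : finType) (e : rel T),
    symmetric e -> irreflexive e ->
    ~ graph_iso (fun A : {set T} => is_kclique e 2 A) (ts_adj e)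
                (fun A : {set 'I_n} => johnson_vertex r A) (johnson_adj r).
Proof.
move=> r_ge3 r_le T e e_sym e_irr [f [f_kcl _ f_onto f_adj]].
have [A [B [cardA cardB cardAB]]] : exists A B : {set 'I_n},
    [/\ #|A| = r, #|B| = r & #|A :&: B| = r.-1] by apply: johnson_edge; lia.
have [X kX fX] := f_onto A (introT eqP cardA); subst A.
have [Y kY fY] := f_onto B (introT eqP cardB); subst B.
have XY : ts_adj e X Y by rewrite f_adj // /johnson_adj cardAB.
have [Z [kZ XZ YZ] noW] := ts2_triangle_without_common_nbr e_sym e_irr kX kY XY.
have /eqP cardZ := f_kcl Z kZ.
have /eqP cardXZ : johnson_adj r (f X) (f Z) by rewrite -f_adj.
have /eqP cardYZ : johnson_adj r (f Y) (f Z) by rewrite -f_adj.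
have [W [cardW WX WY WZ]] :=
  johnson_triangle_common_nbr r_ge3 cardA cardB cardZ cardAB cardXZ cardYZ
    ltac:(rewrite card_ord; lia).
have [W' kW' fW'] := f_onto W (introT eqP cardW); subst W.
by have/negP := noW W'; apply; rewrite !f_adj // /johnson_adj WX WY WZ !eqxx.
Qed.
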